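(* Any Single-Source DSO must take $\Omega(\min\{M^{1/2}n^{3/2},\, n^2\})$ bits of space on at least one undirected graph with $O(n)$ vertices and integer edge weights in the range $[1,M]$.
   Context: For an undirected edge-weighted graph $G$, a source $s$, a target $t$ and an edge $e$, $d(s,t,e)$ is the length of a shortest $s$-$t$ path in $G-e$ ($\infty$ if none). A Single-Source Distance Sensitivity Oracle (DSO) with source $s$ is a data structure (depending on $G$ and $s$) that answers every query $(t,e)$ by returning $d(s,t,e)$. *)

From mathcomp Require Import all_boot.
From Stdlib Require Reals.

Set Implicit Arguments.
Unset Strict Implicit.
Unset Printing Implicit Defensive.

(* An edge-weighted graph on vertex set 'I_N: w (x,y) is the weight of the
   edge {x,y}, 0 meaning "no edge". *)
Definition wgraph (N : nat) := {ffun 'I_N * 'I_N -> nat}.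

Definition valid_graph (N M : nat) (G : wgraph N) : Prop :=
  (forall x y, G (x, y) = G (y, x)) /\
  (forall x, G (x, x) = 0) /\
  (forall x y, 0 < G (x, y) -> G (x, y) <= M).

Definition is_edge N (G : wgraph N) (e : 'I_N * 'I_N) : bool := 0 < G e.

(* adjacency in G - e, where e = (u,v) denotes the undirected edge {u,v} *)
Definition adj_minus N (G : wgraph N) (e : 'I_N * 'I_N) : rel 'I_N :=
  fun x y => (0 < G (x, y)) && ~~ ((x, y) == e) && ~~ ((y, x) == e).

(* a walk s = x0, x1, ..., xk = t, given as s and p = [x1; ...; xk] *)
Definition is_walk N (G : wgraph N) e (s t : 'I_N) (p : seq 'I_N) : bool :=
  path (adj_minus G e) s p && (last s p == t).

Definition walk_weight N (G : wgraph N) (s : 'I_N) (p : seq 'I_N) : nat :=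
  \sum_(xy <- zip (s :: p) p) G xy.

(* d = d(s,t,e): length of a shortest s-t path in G - e, None = infinity *)
Definition is_dist N (G : wgraph N) e (s t : 'I_N) (d : option nat) : Prop :=
  match d with
  | Some k => (exists p, is_walk G e s t p /\ walk_weight G s p = k) /\
              (forall p, is_walk G e s t p -> k <= walk_weight G s p)
  | None => forall p, ~ is_walk G e s t p
  end.

(* A single-source DSO on N-vertex graphs with weights in [1,M]:
   a preprocessing map enc producing a bit string from (G, s), together with
   a query procedure that, from the bit string alone, answers every query
   (t, e) with d(s,t,e). *)
Definition is_SSDSO (N M : nat)
  (enc : wgraph N -> 'I_N -> seq bool)
  (query : seq bool -> 'I_N -> 'I_N * 'I_N -> option nat) : Prop :=
  forall (G : wgraph N) (s : 'I_N), valid_graph M G ->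
    forall (t : 'I_N) (e : 'I_N * 'I_N), is_edge G e ->
      is_dist G e s t (query (enc G s) t e).

Definition lb_fun (n M : nat) : Reals.Rdefinitions.R :=
  Reals.Rbasic_fun.Rmin
    (Reals.Rdefinitions.Rmult (Reals.R_sqrt.sqrt (Reals.Raxioms.INR M))
       (Reals.Rdefinitions.Rmult (Reals.Raxioms.INR n) (Reals.R_sqrt.sqrt (Reals.Raxioms.INR n))))
    (Reals.Rdefinitions.Rmult (Reals.Raxioms.INR n) (Reals.Raxioms.INR n)).

(* Encode a k x n bit matrix X, with k = min(n, sqrt(n M)), as a graph with
   source v_0: a spine v_0 ... v_k of unit edges, from each spine vertex v_m
   (m < k) a chain of total length 2(k - m) + 1 made of edges of weight at
   most M, and a unit edge from the end of chain m to sink j whenever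
   X(m, j) = 1.  After deleting the spine edge v_i v_(i+1), the distance from
   v_0 to sink j is 2k - i + 2 if X(i, j) = 1 and at least 2k - i + 3
   otherwise, since a detour through an earlier chain m < i costs 2k - m + 2.
   Hence the oracle for v_0 determines X, so some X needs k n bits, which is
   of the order of min(sqrt M n^(3/2), n^2).  The chains use at most
   k (2k / M) <= 2n vertices. *)

From mathcomp Require Import all_boot zify.
From Stdlib Require Import Reals Lra.

Set Implicit Arguments.
Unset Strict Implicit.
Unset Printing Implicit Defensive.

Section Walks.
Variables (N : nat) (G : wgraph N) (e : 'I_N * 'I_N).

Definition walk_of_weight (s t : 'I_N) (d : nat) : Prop :=
  exists2 p, is_walk G e s t p & walk_weight G s p = d.

Lemma walk_of_weight0 s : walk_of_weight s s 0.
Proof. by exists [::]; rewrite /is_walk /walk_weight /= ?big_nil. Qed.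

Lemma walk_of_weight_rcons s t u d :
  walk_of_weight s t d -> adj_minus G e t u -> walk_of_weight s u (d + G (t, u)).
Proof.
move=> [p /andP [p_path /eqP p_last] <-] tu; exists (rcons p u).
  by rewrite /is_walk rcons_path p_path p_last tu last_rcons /=.
have zip_rcons (x : 'I_N) q :
    zip (x :: rcons q u) (rcons q u) = rcons (zip (x :: q) q) (last x q, u).
  by elim: q x => [|y q IH] x //=; rewrite IH.
by rewrite /walk_weight zip_rcons big_rcons /= p_last addnC.
Qed.

Lemma walk_weight_ge_potential (phi : 'I_N -> nat) s t p :
  (forall x y, adj_minus G e x y -> phi y <= phi x + G (x, y)) ->
  is_walk G e s t p -> phi t <= phi s + walk_weight G s p.
Proof.
move=> phi_pot; elim: p s => [|y p IH] s.
  by rewrite /is_walk /walk_weight /= => /eqP ->; rewrite big_nil addn0.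
rewrite /is_walk /walk_weight /= big_cons => /andP [/andP [sy p_path] p_last].
have := IH y; rewrite /is_walk p_path p_last => /(_ isT).
by have := phi_pot _ _ sy; rewrite /walk_weight; lia.
Qed.

End Walks.

Lemma is_dist_separates N (G1 G2 : wgraph N) e s t w d :
  walk_of_weight G1 e s t w ->
  (forall p, is_walk G2 e s t p -> w < walk_weight G2 s p) ->
  is_dist G1 e s t d -> ~ is_dist G2 e s t d.
Proof.
move=> [p p_walk <-] long_walks; case: d => [d|] /=; last by move=> /(_ p p_walk) [].
move=> [_ /(_ p p_walk) d_le] [[q [q_walk q_weight]] _].
by have := long_walks q q_walk; rewrite q_weight ltnNge d_le.
Qed.

(* The bits of [b] read as a binary number behind a leading 1. *)
Definition bits_code (b : seq bool) : nat := foldr (fun (x : bool) c => c.*2 + x) 1 b.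

Lemma bits_code_gt0 b : 0 < bits_code b.
Proof. by elim: b => //= x b; lia. Qed.

Lemma bits_code_lt b : bits_code b < expn 2 (size b).+1.
Proof. by elim: b => //= x b IH; rewrite expnS; case: x; lia. Qed.

Lemma bits_code_inj : injective bits_code.
Proof.
elim=> [|x b IH] [|y c] //=.
- by have := bits_code_gt0 c; case: y; lia.
- by have := bits_code_gt0 b; case: x; lia.
move=> E; have [-> /IH ->] // : x = y /\ bits_code b = bits_code c.
by move: E; case: x; case: y; lia.
Qed.

Lemma exists_long_bits (T : finType) (F : T -> seq bool) B :
  injective F -> expn 2 B <= #|T| -> exists x, B <= size (F x).
Proof.
move=> F_inj card_T; apply/existsP; apply: contraLR card_T => /existsPn short.
have code_lt x : (bits_code (F x)).-1 < (expn 2 B).-1.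
  have := bits_code_lt (F x); have := bits_code_gt0 (F x).
  have : expn 2 (size (F x)).+1 <= expn 2 B by rewrite leq_pexp2l // ltnNge short.
  lia.
have code_inj : injective (fun x => Ordinal (code_lt x)).
  move=> x y [] E; apply/F_inj/bits_code_inj.
  by have := bits_code_gt0 (F x); have := bits_code_gt0 (F y); lia.
have := leq_card _ code_inj; rewrite card_ord -ltnNge; have := expn_gt0 2 B; lia.
Qed.

Notation spine a := (inl (inl a)).
Notation chain m o := (inl (inr (m, o))).
Notation sink j := (inr j).

Section Construction.
Variables (k n M : nat).

Definition chain_height := (2 * k) %/ M.
Definition chain_len (m : nat) := (2 * k - 2 * m) %/ M.
Definition chain_entry (m : nat) := (2 * k - 2 * m) %% M + 1.

(* Spine vertices, chain vertices (chain m o for o <= chain_len m; the others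
   stay isolated), and sinks. *)
Definition vertex := (('I_k.+1 + 'I_k * 'I_chain_height.+1) + 'I_n)%type.
Definition bitmatrix := {ffun 'I_k * 'I_n -> bool}.

(* Each edge is listed once, oriented away from the source. *)
Definition arc_weight (X : bitmatrix) (x y : vertex) : nat :=
  match x, y with
  | spine a, spine b => if b == a.+1 :> nat then 1 else 0
  | spine a, chain m o =>
      if (a == m :> nat) && (o == 0 :> nat) then chain_entry m else 0
  | chain m o, chain m' o' =>
      if [&& m == m', o' == o.+1 :> nat & o' <= chain_len m] then M else 0
  | chain m o, sink j => if (o == chain_len m :> nat) && X (m, j) then 1 else 0
  | _, _ => 0
  end.

Inductive arc (X : bitmatrix) : vertex -> vertex -> nat -> Prop :=
  | ArcSpine (a b : 'I_k.+1) :
      b = a.+1 :> nat -> arc X (spine a) (spine b) 1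
  | ArcEntry (a : 'I_k.+1) (m : 'I_k) (o : 'I_chain_height.+1) :
      a = m :> nat -> o = 0 :> nat -> arc X (spine a) (chain m o) (chain_entry m)
  | ArcChain (m : 'I_k) (o o' : 'I_chain_height.+1) :
      o' = o.+1 :> nat -> o' <= chain_len m -> arc X (chain m o) (chain m o') M
  | ArcSink (m : 'I_k) (o : 'I_chain_height.+1) (j : 'I_n) :
      o = chain_len m :> nat -> X (m, j) -> arc X (chain m o) (sink j) 1.

Lemma arc_weightP X x y : 0 < arc_weight X x y -> arc X x y (arc_weight X x y).
Proof.
case: x => [[a|[m o]]|j]; case: y => [[b|[m' o']]|j'] //=;
  repeat case: ifP => //.
- by move=> /eqP b_a _; apply: ArcSpine.
- by move=> /andP [/eqP a_m /eqP o0] _; apply: ArcEntry.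
- by move=> /and3P [/eqP <- /eqP o'S o'_le] _; apply: ArcChain.
- by move=> /andP [/eqP o_len X_mj] _; apply: ArcSink.
Qed.

Lemma arc_weight_rev X x y w : arc X x y w -> arc_weight X y x = 0.
Proof.
case=> [a b b_a|a m o|m o o' o'_o _|] //=.
- by rewrite b_a; case: ifP => // /eqP; lia.
- by rewrite o'_o eq_sym eqxx /=; case: ifP => // /eqP; lia.
Qed.

Lemma arc_weightE X x y w : arc X x y w -> arc_weight X x y = w.
Proof.
case=> [a b b_a|a m o a_m o0|m o o' o'_o o'_le|m o j o_len X_mj] /=.
- by rewrite b_a eqxx.
- by rewrite a_m o0 !eqxx.
- by rewrite o'_o !eqxx -o'_o o'_le.
- by rewrite o_len eqxx X_mj.
Qed.

Lemma arc_weight_range X x y w : 0 < M -> arc X x y w -> 0 < w <= M.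
Proof.
move=> M_gt0; case=> * //=; last by rewrite M_gt0 /=.
by rewrite /chain_entry addn1 ltn_pmod.
Qed.

Definition weight X (x y : vertex) := maxn (arc_weight X x y) (arc_weight X y x).

Lemma weightC X x y : weight X x y = weight X y x.
Proof. exact: maxnC. Qed.

Lemma weight_arc X x y w : arc X x y w -> weight X x y = w.
Proof.
by move=> xy; rewrite /weight (arc_weightE xy) (arc_weight_rev xy) maxn0.
Qed.

Definition graph X : wgraph #|{: vertex}| :=
  [ffun xy => weight X (enum_val xy.1) (enum_val xy.2)].

Lemma graph_rank X x y : graph X (enum_rank x, enum_rank y) = weight X x y.
Proof. by rewrite ffunE /= !enum_rankK. Qed.

Lemma arc_weight_le X x y : 0 < M -> arc_weight X x y <= M.
Proof.
move=> M_gt0; have [->//|/arc_weightP xy] := posnP (arc_weight X x y).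
by case/andP: (arc_weight_range M_gt0 xy).
Qed.

Lemma valid_graph_graph X : 0 < M -> valid_graph M (graph X).
Proof.
move=> M_gt0; split; [|split] => [x y|x|x y _]; rewrite !ffunE /=.
- exact: weightC.
- rewrite /weight maxnn.
  have [//|/arc_weightP] := posnP (arc_weight X (enum_val x) (enum_val x)).
  exact: arc_weight_rev.
- by rewrite geq_max !arc_weight_le.
Qed.

Lemma chain_len_le m : chain_len m <= chain_height.
Proof. by apply: leq_div2r; rewrite leq_subr. Qed.

Lemma chain_entry_len m : chain_entry m + chain_len m * M = 2 * (k - m) + 1.
Proof.
by rewrite /chain_entry /chain_len addnAC [X in X + 1]addnC -divn_eq mulnBr.
Qed.

Lemma card_vertex : #|{: vertex}| = k.+1 + k * chain_height.+1 + n.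
Proof. by rewrite !card_sum card_prod !card_ord. Qed.

Definition source : 'I_#|{: vertex}| := enum_rank (spine ord0 : vertex).

Section Cut.
Hypothesis M_gt0 : 0 < M.
Variables (i : 'I_k) (j : 'I_n).

Definition cut_lo : 'I_k.+1 := widen_ord (leqnSn k) i.
Definition cut_hi : 'I_k.+1 := lift ord0 i.
Definition cut_edge :=
  (enum_rank (spine cut_lo : vertex), enum_rank (spine cut_hi : vertex)).

Definition on_cut (x y : vertex) : bool :=
  if (x, y) is (spine a, spine b) then (a == i :> nat) && (b == i.+1 :> nat)
  else false.

Lemma eq_cut_edge x y : ((enum_rank x, enum_rank y) == cut_edge) = on_cut x y.
Proof.
rewrite xpair_eqE !(inj_eq enum_rank_inj).
by case: x => [[a|[m o]]|j1]; case: y => [[b|[m' o']]|j2];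
  rewrite /= ?(inj_eq inl_inj) ?andbF.
Qed.

Lemma arc_rev_on_cut X x y w : arc X x y w -> on_cut y x = false.
Proof. by case=> // a b b_a; rewrite /on_cut /= b_a; lia. Qed.

Lemma adj_rank X x y :
  adj_minus (graph X) cut_edge (enum_rank x) (enum_rank y) =
  [&& 0 < weight X x y, ~~ on_cut x y & ~~ on_cut y x].
Proof. by rewrite /adj_minus graph_rank !eq_cut_edge andbA. Qed.

Lemma is_edge_cut_edge X : is_edge (graph X) cut_edge.
Proof. by rewrite /is_edge graph_rank (@weight_arc X _ _ 1) //; apply: ArcSpine. Qed.

Lemma walk_arc X x y w d : arc X x y w -> ~~ on_cut x y ->
  walk_of_weight (graph X) cut_edge source (enum_rank x) d ->
  walk_of_weight (graph X) cut_edge source (enum_rank y) (d + w).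
Proof.
move=> xy not_cut walk_x.
have adj_xy : adj_minus (graph X) cut_edge (enum_rank x) (enum_rank y).
  rewrite adj_rank (weight_arc xy) (arc_rev_on_cut xy) not_cut andbT.
  by case/andP: (arc_weight_range M_gt0 xy).
by have := walk_of_weight_rcons walk_x adj_xy; rewrite graph_rank (weight_arc xy).
Qed.

Lemma walk_spine X a : a <= i ->
  walk_of_weight (graph X) cut_edge source (enum_rank (spine (inord a) : vertex)) a.
Proof.
have i_lt := ltn_ord i; elim: a => [_|a IH a_lt].
  have -> : inord 0 = ord0 :> 'I_k.+1 by apply: val_inj => /=; rewrite inordK.
  exact: walk_of_weight0.
rewrite -[X in walk_of_weight _ _ _ _ X]addn1.
apply: (walk_arc _ _ (IH (ltnW a_lt))).
  by apply: ArcSpine; rewrite !inordK //; lia.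
by rewrite /on_cut /= !inordK; lia.
Qed.

Lemma walk_chain X o : o <= chain_len i ->
  walk_of_weight (graph X) cut_edge source (enum_rank (chain i (inord o) : vertex))
    (i + chain_entry i + o * M).
Proof.
have len_le := chain_len_le i; have i_lt := ltn_ord i.
elim: o => [_|o IH o_lt].
  rewrite mul0n addn0; apply: (walk_arc _ _ (walk_spine X (leqnn i))) => //.
  by apply: ArcEntry; rewrite inordK //; lia.
rewrite mulSnr addnA; apply: (walk_arc _ _ (IH (ltnW o_lt))) => //.
by apply: ArcChain; rewrite !inordK //; lia.
Qed.

Lemma walk_sink (X : bitmatrix) : X (i, j) ->
  walk_of_weight (graph X) cut_edge source (enum_rank (sink j : vertex))
    (2 * k - i + 2).
Proof.
move=> X_ij; have i_lt := ltn_ord i.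
have -> : 2 * k - i + 2 = i + chain_entry i + chain_len i * M + 1.
  by rewrite -[i + chain_entry i + _]addnA chain_entry_len; lia.
apply: (walk_arc _ _ (walk_chain X (leqnn _))) => //.
by apply: ArcSink => //; rewrite inordK // ltnS chain_len_le.
Qed.

Definition blocked_dist := 2 * k - i + 3.

(* Distances from v_0 along v_0 ... v_i and the chains m <= i, truncated at
   [blocked_dist]; sinks other than j sit one below the cap. *)
Definition potential (x : vertex) : nat :=
  match x with
  | spine a => if a <= i then val a else blocked_dist
  | chain m o =>
      if m <= i then minn (m + chain_entry m + o * M) blocked_dist else blocked_dist
  | sink j' => if j' == j then blocked_dist else blocked_dist.-1
  end.

Lemma potential_arc (Y : bitmatrix) x y w :
  ~~ Y (i, j) -> arc Y x y w -> ~~ on_cut x y ->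
  potential x <= potential y + w /\ potential y <= potential x + w.
Proof.
move=> Y_ij; have i_lt := ltn_ord i.
case=> [a b b_a|a m o a_m o0|m o o' o'_o _|m o j' o_len Y_mj'] /=;
  rewrite /blocked_dist.
- by rewrite /on_cut /= b_a; case: ifP; case: ifP; lia.
- by rewrite a_m o0; case: ifP; lia.
- by rewrite o'_o; case: ifP; lia.
move=> _; have m_lt := ltn_ord m; rewrite -addnA o_len chain_entry_len.
case: eqVneq => [j'_j | _]; last by case: ifP; lia.
have m_i : m != i :> nat by apply: contraNneq Y_ij => /val_inj <-; rewrite -j'_j.
by case: ifP; lia.
Qed.

Lemma potential_adj (Y : bitmatrix) : ~~ Y (i, j) -> forall x y,
  adj_minus (graph Y) cut_edge x y ->
  potential (enum_val y) <= potential (enum_val x) + graph Y (x, y).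
Proof.
move=> Y_ij x y; rewrite -[x]enum_valK -[y]enum_valK adj_rank graph_rank !enum_rankK.
move: (enum_val x) (enum_val y) => {x y} a b /and3P [pos not_ab not_ba].
have [ab0 | /arc_weightP ab] := posnP (arc_weight Y a b); last first.
  by rewrite (weight_arc ab); case: (potential_arc Y_ij ab not_ab).
have /arc_weightP ba : 0 < arc_weight Y b a by move: pos; rewrite /weight ab0 max0n.
by rewrite weightC (weight_arc ba); case: (potential_arc Y_ij ba not_ba).
Qed.

Lemma walk_weight_sink_gt (Y : bitmatrix) p : ~~ Y (i, j) ->
  is_walk (graph Y) cut_edge source (enum_rank (sink j : vertex)) p ->
  2 * k - i + 2 < walk_weight (graph Y) source p.
Proof.
move=> Y_ij /(walk_weight_ge_potential (potential_adj Y_ij)).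
by rewrite /source !enum_rankK /= eqxx /blocked_dist; lia.
Qed.

Lemma graph_code_neq enc query (X Y : bitmatrix) : is_SSDSO M enc query ->
  X (i, j) -> ~~ Y (i, j) -> enc (graph X) source <> enc (graph Y) source.
Proof.
move=> dso X_ij Y_ij same_code.
have dist Z := dso (graph Z) source (valid_graph_graph Z M_gt0)
  (enum_rank (sink j : vertex)) cut_edge (is_edge_cut_edge Z).
apply: (is_dist_separates (walk_sink X_ij)
  (fun p => @walk_weight_sink_gt Y p Y_ij) (dist X)).
by rewrite same_code; apply: dist.
Qed.

End Cut.

Lemma graph_code_inj enc query : 0 < M -> is_SSDSO M enc query ->
  injective (fun X => enc (graph X) source).
Proof.
move=> M_gt0 dso X Y same_code; apply/ffunP => -[i j].
case X_ij: (X (i, j)); case Y_ij: (Y (i, j)) => //; exfalso.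
- by apply: (graph_code_neq M_gt0 dso X_ij _ same_code); rewrite Y_ij.
- by apply: (graph_code_neq M_gt0 dso Y_ij _ (esym same_code)); rewrite X_ij.
Qed.

End Construction.

Lemma card_vertex_le k n M : 0 < n -> 0 < M -> k <= n -> k * k <= n * M ->
  #|{: vertex k n M}| <= 6 * n.
Proof.
move=> n_gt0 M_gt0 k_le kk_le; rewrite card_vertex.
have : k * chain_height k M * M <= 2 * n * M.
  rewrite -mulnA; apply: leq_trans (leq_mul (leqnn k) (leq_divM _ _)) _; nia.
by rewrite leq_pmul2r //; lia.
Qed.

Lemma sqrt_le_twice_sqrtn m : 0 < m -> (sqrt (INR m) <= 2 * INR (Nat.sqrt m))%R.
Proof.
move=> m_gt0; have [lo hi] := Nat.sqrt_spec m (Nat.le_0_l _).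
set s := Nat.sqrt m in lo hi *.
have s_ge1 : (1 <= INR s)%R by apply: (le_INR 1); apply/leP; nia.
have : (INR m <= INR s.+1 * INR s.+1)%R by rewrite -mult_INR; apply: le_INR; lia.
move/sqrt_le_1_alt; rewrite sqrt_square; last exact: pos_INR.
by rewrite S_INR; lra.
Qed.

Lemma half_lb_fun_le n M B : 0 < n -> 0 < M ->
  minn n (Nat.sqrt (n * M)) * n <= B -> (/2 * lb_fun n M <= INR B)%R.
Proof.
move=> n_gt0 M_gt0 B_ge; have n_ge0 := pos_INR n.
have -> : lb_fun n M = Rmin (sqrt (INR (n * M)) * INR n) (INR n * INR n).
  rewrite /lb_fun -multE mult_INR sqrt_mult //; last exact: pos_INR.
  by congr (Rmin _ _); ring.
have B_ge' : (INR (minn n (Nat.sqrt (n * M))) * INR n <= INR B)%R.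
  by rewrite -mult_INR; apply: le_INR; apply/leP.
case: (leqP n (Nat.sqrt (n * M))) => [/minn_idPl | /ltnW/minn_idPr] k_eq;
  rewrite k_eq in B_ge'.
  by have := Rmin_r (sqrt (INR (n * M)) * INR n) (INR n * INR n); nra.
have nM_gt0 : 0 < n * M by rewrite muln_gt0 n_gt0.
have := sqrt_le_twice_sqrtn nM_gt0.
have := Rmin_l (sqrt (INR (n * M)) * INR n) (INR n * INR n); nra.
Qed.

Theorem theorem4 :
  exists (C : nat) (c : R) (n0 : nat), (0 < c)%R /\
    forall n M : nat, (n0 <= n)%N -> (1 <= M)%N ->
    exists N : nat, (N <= C * n)%N /\
      forall (enc : wgraph N -> 'I_N -> seq bool)
             (query : seq bool -> 'I_N -> 'I_N * 'I_N -> option nat),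
        is_SSDSO M enc query ->
        exists (G : wgraph N) (s : 'I_N),
          valid_graph M G /\ (c * lb_fun n M <= INR (size (enc G s)))%R.
Proof.
exists 6, (/2)%R, 1; split; first lra.
move=> n M n_gt0 M_gt0; set k := minn n (Nat.sqrt (n * M)).
have kk_le : k * k <= n * M.
  have [sqrt_sq _] := Nat.sqrt_spec (n * M) (Nat.le_0_l _).
  by apply: leq_trans (leq_mul (geq_minr _ _) (geq_minr _ _)) _; apply/leP.
exists #|{: vertex k n M}|; split; first exact: card_vertex_le (geq_minl _ _) kk_le.
move=> enc query dso.
have card_bits : expn 2 (k * n) <= #|{: bitmatrix k n}|.
  by rewrite card_ffun card_bool card_prod !card_ord.
have [X long_code] := exists_long_bits (graph_code_inj M_gt0 dso) card_bits.
exists (graph M X), (source k n M); split; first exact: valid_graph_graph.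
exact: half_lb_fun_le.
Qed.
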